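(* Let $m\geq 1$ and let $\Lambda_m\subseteq\mathbb{R}^{2^m}$ be the Barnes–Wall lattice defined below, whose minimum is $2^{m-1}$. If $x\in\Lambda_m$ satisfies $(x,x)>2^{m-1}$, then $(x,x)\geq 2^{m-1}+2^{m-2}$.
   Context: Let $\mathcal{V}_m=\mathbb{F}_2^m$ and let $(e_v\mid v\in\mathcal{V}_m)$ be an orthonormal basis of Euclidean space $(\mathbb{R}^{2^m},(\cdot,\cdot))$ indexed by $\mathcal{V}_m$. For $\mathcal{U}\subseteq\mathcal{V}_m$ put $x_{\mathcal{U}}=\sum_{v\in\mathcal{U}}e_v$. Define $\Lambda_m=\langle 2^{\lfloor (m-r)/2\rfloor}x_{\mathcal{U}} \mid 0\le r\le m,\ \mathcal{U}\text{ an affine subspace of }\mathcal{V}_m\text{ of dimension }r\rangle_{\mathbb{Z}}$. The minimum (smallest value of $(x,x)$ for nonzero $x\in\Lambda_m$) equals $2^{m-1}$. *)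

From HB Require Import structures.
From mathcomp Require Import all_boot all_order all_algebra.
Set Implicit Arguments. Unset Strict Implicit. Unset Printing Implicit Defensive.
Import Order.TTheory GRing.Theory Num.Theory.
Local Open Scope ring_scope.

Notation Vm m := ('rV['F_2]_m).

Definition affine_sub (m : nat) (a : Vm m) (W : {vspace Vm m}) : {set Vm m} :=
  [set v : Vm m | v - a \in W].

(* Vectors of R^{2^m}, coordinates indexed by V_m (orthonormal basis e_v). *)
Notation vecR R m := {ffun Vm m -> R}.

Definition xU (R : realFieldType) (m : nat) (U : {set Vm m}) : vecR R m :=
  [ffun v => (v \in U)%:R].

Definition dotR (R : realFieldType) (m : nat) (x y : vecR R m) : R :=
  \sum_(v : Vm m) x v * y v.

Definition BW_gen (R : realFieldType) (m : nat) (x : vecR R m) : Prop :=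
  exists (r : nat) (a : Vm m) (W : {vspace Vm m}),
    [/\ (r <= m)%N, \dim W = r &
        x = [ffun v => 2 ^+ ((m - r)./2) * xU R (@affine_sub m a W) v]].

(* Lambda_m : the Z-span (additive subgroup generated) of the generators. *)
Inductive BW (R : realFieldType) (m : nat) : vecR R m -> Prop :=
  | BW_g (x : vecR R m) : BW_gen x -> BW x
  | BW_0 : BW (0 : vecR R m)
  | BW_sub (x y : vecR R m) : BW x -> BW y -> BW (x - y).

From HB Require Import structures.
From mathcomp Require Import all_boot all_order all_algebra finfield.
From mathcomp Require Import ring lra zify.
From Stdlib Require Import Classical.
Import Order.TTheory GRing.Theory Num.Theory.
Local Open Scope ring_scope.
Set Implicit Arguments. Unset Strict Implicit. Unset Printing Implicit Defensive.

(* Write L_t(a + W) for the lattice [bwl t a W] below, so that Lambda_m = L_0(V)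
   and L_(t+2) = 2 L_t.  Cutting a + W along a hyperplane W' with direction c sends
   x to its halves u = x|_(a+W') and w = x(. + c)|_(a+W'); then u, w lie in
   L_t(a + W'), u - w lies in L_(t+1)(a + W'), and (x,x) = (u,u) + (w,w).
   Induction on dim W then gives, for all t at once, the minimum 2^(dim W + t - 1)
   and the gap: 2(x,x) > 2^(dim W + t) forces 4(x,x) >= 3 2^(dim W + t).  In the
   inductive step the only delicate case is a half of minimal norm, say u: then
   u - w or u + w lies in L_(t+1) with norm close to its minimum, and this is ruled
   out by a constraint on the inner products of minimal vectors of L_t and
   L_(t+1).  That constraint reduces to t = 0, where a minimal vector of L_0
   vanishes on one half of some cut: otherwise u^2 would have equal sums on the
   two halves of every cut, hence be constant, and 2 u(a)^2 = 1 with u(a) an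
   integer. *)

Section AffineF2.
Variable m : nat.
Local Notation V := 'rV['F_2]_m.
Implicit Types (a b c v : V) (W Y : {vspace V}) (k : nat).

Lemma F2_0or1 (k : 'F_2) : k = 0 \/ k = 1.
Proof. by case: k => [[|[|]]] // ?; [left|right]; apply/val_inj. Qed.

Lemma addrr_F2 v : v + v = 0.
Proof. by apply/rowP => i; rewrite !mxE addrr_pchar2 // pchar_Fp. Qed.

Lemma subr_F2 a b : a - b = a + b.
Proof. by rewrite -[- b]add0r -(addrr_F2 b) addrK. Qed.

Lemma addrK_F2 a b : a + b + b = a.
Proof. by rewrite -addrA addrr_F2 addr0. Qed.

Lemma memv_add_line W c v : (v \in W + <[c]>)%VS = (v \in W) || (v + c \in W).
Proof.
apply/memv_addP/orP => [[w wW [y /vlineP[k ->] ->]]|[vW|vcW]].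
- case: (F2_0or1 k) => ->; first by rewrite scale0r addr0; left.
  by rewrite scale1r addrK_F2; right.
- by exists v => //; exists 0; rewrite ?mem0v ?addr0.
- by exists (v + c) => //; exists c; rewrite ?memv_line ?addrK_F2.
Qed.

Lemma dim_add_line W c : c \notin W -> \dim (W + <[c]>) = (\dim W).+1.
Proof.
move=> cW; rewrite dimv_disjoint_sum ?dim_vline; last first.
  apply/vspaceP => v; rewrite memv_cap memv0.
  apply/andP/eqP => [[vW /vlineP[k vk]]|->]; last by rewrite !mem0v.
  case: (F2_0or1 k) vk => -> vk; first by rewrite vk scale0r.
  by move: vW; rewrite vk scale1r (negbTE cW).
by case: eqP cW => [->|_ _]; rewrite ?mem0v ?addn1.
Qed.

Lemma vspace_add_line W k : \dim W = k.+1 ->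
  exists W' c, [/\ c \notin W', W = (W' + <[c]>)%VS & \dim W' = k].
Proof.
move=> dW; have bW := vbasisP W.
have : size (vbasis W) = k.+1 by rewrite size_tuple dW.
move: (basis_free bW) (span_basis bW); case: (tval (vbasis W)) => [|c X] //=.
rewrite free_cons span_cons => /andP[cX fX] <- [sX].
exists <<X>>%VS, c; split => //; first by rewrite addvC.
by move: fX; rewrite /free sX => /eqP.
Qed.

Lemma mem_affine a W v : (v \in affine_sub a W) = (v + a \in W).
Proof. by rewrite inE subr_F2. Qed.

Lemma affine_sub_rebase a b W : b + a \in W -> affine_sub b W = affine_sub a W.
Proof.
move=> baW; apply/setP => v; rewrite !mem_affine.
have -> : v + a = v + b + (b + a) by rewrite addrA addrK_F2.
by rewrite (rpredDr _ baW).
Qed.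

Lemma affine_sub_add_line a W c : c \notin W ->
  affine_sub a (W + <[c]>) = affine_sub a W :|: affine_sub (a + c) W.
Proof. by move=> cW; apply/setP => v; rewrite in_setU !mem_affine memv_add_line addrA. Qed.

Lemma disjoint_affine_sub_line a W c : c \notin W ->
  [disjoint affine_sub a W & affine_sub (a + c) W].
Proof.
move=> cW; apply/pred0P => v /=; rewrite !mem_affine.
apply/negP => /andP[vaW vacW]; case/negP: cW.
have -> : c = v + a + (v + (a + c)).
  by rewrite addrACA addrr_F2 add0r addrA addrr_F2 add0r.
exact: rpredD.
Qed.

Lemma sum_affine_shift (R : nmodType) (F : V -> R) a c W :
  \sum_(v in affine_sub (a + c) W) F v = \sum_(v in affine_sub a W) F (v + c).
Proof.
rewrite (reindex_inj (addIr c)); apply: eq_bigl => v.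
by rewrite !mem_affine addrACA addrr_F2 addr0.
Qed.

Lemma sum_affine_add_line (R : nmodType) (F : V -> R) a c W : c \notin W ->
  \sum_(v in affine_sub a (W + <[c]>)) F v =
  \sum_(v in affine_sub a W) F v + \sum_(v in affine_sub a W) F (v + c).
Proof.
move=> cW; rewrite affine_sub_add_line // -sum_affine_shift.
rewrite -bigU ?disjoint_affine_sub_line //.
by apply: eq_bigl => v; rewrite in_setU.
Qed.

Lemma card_affine_sub a W : #|affine_sub a W| = (2 ^ \dim W)%N.
Proof.
have -> : affine_sub a W = [set v + a | v in [set v | v \in W]].
  apply/setP => v; rewrite mem_affine; apply/idP/imsetP => [vaW|[w]].
    by exists (v + a); rewrite ?inE ?addrK_F2.
  by rewrite inE => wW ->; rewrite addrK_F2.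
by rewrite card_imset; [rewrite cardsE card_vspace card_Fp | exact: addIr].
Qed.

Lemma affine_subI_sub a q W Y : (Y <= W)%VS ->
  affine_sub a W :&: affine_sub q Y = if q + a \in W then affine_sub q Y else set0.
Proof.
move=> YW; apply/setP => v; rewrite in_setI mem_affine.
have [vqY|vqY] := boolP (v \in affine_sub q Y); last first.
  by case: ifP; rewrite ?in_set0 ?(negbTE vqY) andbF.
have -> : v + a = v + q + (q + a) by rewrite addrA addrK_F2.
have vqW : v + q \in W by apply: (subvP YW); rewrite -mem_affine.
rewrite andbT (rpredDl _ vqW).
by case: ifP; rewrite ?in_set0 ?vqY.
Qed.

Lemma addv_transversal W Y c : c \notin W -> (Y <= W + <[c]>)%VS -> ~~ (Y <= W)%VS ->
  (Y + W)%VS = (W + <[c]>)%VS.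
Proof.
move=> cW YWc YW; apply/eqP; rewrite eqEdim subv_add YWc addvSl dim_add_line //=.
have := dimv_leqif_sup (addvSr Y W); rewrite subv_add (negbTE YW) /=.
by move/ltn_leqif.
Qed.

Lemma dim_capv_transversal W Y c : c \notin W -> (Y <= W + <[c]>)%VS ->
  ~~ (Y <= W)%VS -> (\dim (Y :&: W)).+1 = \dim Y.
Proof.
move=> cW YWc YW; have := dimv_sum_cap Y W.
by rewrite (addv_transversal cW) // dim_add_line //; lia.
Qed.

Lemma affine_subI_transversal a q W Y c : c \notin W -> (Y <= W + <[c]>)%VS ->
  ~~ (Y <= W)%VS -> q + a \in (W + <[c]>)%VS ->
  exists2 p, p + a \in W & affine_sub a W :&: affine_sub q Y = affine_sub p (Y :&: W).
Proof.
move=> cW YWc YW; rewrite -(addv_transversal cW YWc YW).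
case/memv_addP => y yY [w wW qaE]; exists (q + y).
  by rewrite addrAC qaE addrC addrA addrr_F2 add0r.
apply/setP => v; rewrite in_setI !mem_affine memv_cap addrA (rpredDr _ yY) andbC.
have -> : v + q + y = v + a + w.
  have aE : a = q + (y + w) by rewrite -qaE addrA addrr_F2 add0r.
  by rewrite aE !addrA addrK_F2.
by rewrite (rpredDr _ wW).
Qed.

End AffineF2.

Lemma subrACA (U : zmodType) (x y z t : U) : x - y - (z - t) = (x - z) - (y - t).
Proof. by rewrite !opprB addrACA [RHS]addrACA (addrC (- z)). Qed.

Section BarnesWall.
Variables (R : realFieldType) (m : nat).
Local Notation V := 'rV['F_2]_m.
Local Notation vec := (vecR R m).
Implicit Types (a b c p q v : V) (W Y : {vspace V}) (x y z u s w : vec).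
Implicit Types (g : V -> R) (A : {set V}) (k t e : nat).

Definition balanced g a W :=
  forall b W' c, b + a \in W -> c \notin W' -> W = (W' + <[c]>)%VS ->
  \sum_(v in affine_sub b W') g v = \sum_(v in affine_sub (b + c) W') g v.

Lemma balanced_hyperplane g a b W c : balanced g a (W + <[c]>) -> c \notin W ->
  b + a \in (W + <[c]>)%VS -> balanced g b W.
Proof.
move=> bal cW baW b' W' d b'bW dW' WE.
have W'W : (W' <= W)%VS by rewrite WE addvSl.
have dW : d \in W by rewrite WE memv_add_line addrr_F2 mem0v orbT.
have cW' : c \notin W' by apply: contra cW; apply: subvP.
have b'aW : b' + a \in (W + <[c]>)%VS.
  have -> : b' + a = b' + b + (b + a) by rewrite addrA addrK_F2.
  by apply: rpredD baW; rewrite memv_add_line b'bW.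
have cdW' : c + d \notin W'.
  by apply: contra cW => /(subvP W'W) cdW; rewrite -(addrK_F2 c d); apply: rpredD.
have dWc : d \notin (W' + <[c]>)%VS.
  rewrite memv_add_line negb_or dW' /=; apply: contra cW => /(subvP W'W) dcW.
  by rewrite -(addrK_F2 c d) (addrC c d); apply: rpredD.
have dWcd : d \notin (W' + <[c + d]>)%VS.
  by rewrite memv_add_line negb_or dW' addrC addrK_F2.
have E1 : (W + <[c]> = W' + <[c]> + <[d]>)%VS by rewrite WE -!addvA (addvC <[d]>%VS).
have E2 : (W + <[c]> = W' + <[c + d]> + <[d]>)%VS.
  apply/vspaceP => v; rewrite WE !memv_add_line !addrA (addrAC v d c) addrK_F2.
  by do 4![case: (_ \in W')].
have := bal b' _ d b'aW dWc E1; have := bal b' _ d b'aW dWcd E2.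
rewrite !sum_affine_add_line // !(sum_affine_shift _ b' d).
have -> : \sum_(v in affine_sub b' W') g (v + d + (c + d)) =
          \sum_(v in affine_sub b' W') g (v + c).
  by apply: eq_bigr => v _; rewrite addrA (addrAC v d c) addrK_F2.
have -> : \sum_(v in affine_sub b' W') g (v + d + c) =
          \sum_(v in affine_sub b' W') g (v + (c + d)).
  by apply: eq_bigr => v _; rewrite addrA (addrAC v d c).
lra.
Qed.

Lemma balanced_const k g a W : \dim W = k -> balanced g a W ->
  forall v, v + a \in W -> g v = g a.
Proof.
elim: k g a W => [|k IHk] g a W dW bal v.
  move/eqP: dW; rewrite dimv_eq0 => /eqP ->.
  by rewrite memv0 -subr_F2 subr_eq0 => /eqP ->.
have [W' [c [cW WE dW']]] := vspace_add_line dW; rewrite {}WE in bal *.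
have aaW : a + a \in (W' + <[c]>)%VS by rewrite addrr_F2 mem0v.
have acaW : a + c + a \in (W' + <[c]>)%VS.
  by rewrite addrAC addrr_F2 add0r memv_add_line addrr_F2 mem0v orbT.
have ga := IHk _ _ _ dW' (balanced_hyperplane bal cW aaW).
have gac := IHk _ _ _ dW' (balanced_hyperplane bal cW acaW).
have sum_const b (r : R) : (forall v', v' + b \in W' -> g v' = r) ->
    \sum_(v' in affine_sub b W') g v' = r *+ 2 ^ k.
  move=> gr; rewrite -dW' -(card_affine_sub b W') -sumr_const.
  by apply: eq_bigr => v'; rewrite mem_affine; apply: gr.
have gacE : g (a + c) = g a.
  have := bal a W' c aaW cW erefl; rewrite (sum_const _ _ ga) (sum_const _ _ gac).
  by move/eqP; rewrite eqr_pMn2r ?expn_gt0 // eq_sym => /eqP.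
rewrite memv_add_line => /orP[/ga // | vacW].
by rewrite -gacE; apply: gac; rewrite addrA.
Qed.

Definition pow2_xU (e : nat) (U : {set V}) : vec := [ffun v => 2 ^+ e * xU R U v].

Lemma pow2_xUE e U v : pow2_xU e U v = 2 ^+ e * (v \in U)%:R.
Proof. by rewrite !ffunE. Qed.

Lemma pow2_xUS e U : pow2_xU e.+1 U = pow2_xU e U + pow2_xU e U.
Proof. by apply/ffunP => v; rewrite [RHS]ffunE !pow2_xUE exprS mulr2n !mulrDl !mul1r. Qed.

(* [bwl t a W] is the Barnes-Wall lattice of the affine space a + W with all
   exponents shifted by t; the extra j >= 0 is redundant but lets generators
   absorb powers of 2. *)
Inductive bwl (t : nat) a W : vec -> Prop :=
  | bwl_gen b Y j : (Y <= W)%VS -> b + a \in W ->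
      bwl t a W (pow2_xU ((\dim W - \dim Y + t)./2 + j) (affine_sub b Y))
  | bwl0 : bwl t a W 0
  | bwlB x y : bwl t a W x -> bwl t a W y -> bwl t a W (x - y).

Lemma bwlN t a W x : bwl t a W x -> bwl t a W (- x).
Proof. by move=> Hx; rewrite -sub0r; apply: bwlB => //; apply: bwl0. Qed.

Lemma bwl_gen_le t a W b Y e : (Y <= W)%VS -> b + a \in W ->
  ((\dim W - \dim Y + t)./2 <= e)%N -> bwl t a W (pow2_xU e (affine_sub b Y)).
Proof. by move=> YW baW /subnKC <-; apply: bwl_gen. Qed.

Lemma bwl_rebase t a b W x : b + a \in W -> bwl t a W x -> bwl t b W x.
Proof.
move=> baW; elim=> [q Y j YW qaW||x1 x2 _ H1 _ H2]; last 2 first.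
- exact: bwl0.
- exact: bwlB.
apply: bwl_gen => //; have -> : q + b = q + a + (b + a).
  by rewrite addrACA addrr_F2 addr0.
exact: rpredD.
Qed.

Lemma bwl_succ t a W x : bwl t.+1 a W x -> bwl t a W x.
Proof.
elim=> [b Y j YW baW||x1 x2 _ H1 _ H2]; last 2 first.
- exact: bwl0.
- exact: bwlB.
by apply: bwl_gen_le => //; rewrite addnS -!divn2; lia.
Qed.

Lemma bwl_double t a W x : bwl t a W x -> bwl t.+1 a W (x + x).
Proof.
elim=> [b Y j YW baW||x1 x2 _ H1 _ H2].
- by rewrite -pow2_xUS; apply: bwl_gen_le => //; rewrite addnS -!divn2; lia.
- by rewrite addr0; apply: bwl0.
- by rewrite addrACA -opprD; apply: bwlB.
Qed.

Lemma bwl_halve t a W x : bwl t.+2 a W x -> exists2 y, bwl t a W y & x = y + y.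
Proof.
elim=> [b Y j YW baW|| x1 x2 _ [y1 H1 ->] _ [y2 H2 ->]].
- exists (pow2_xU ((\dim W - \dim Y + t)./2 + j) (affine_sub b Y)); first exact: bwl_gen.
  by rewrite -pow2_xUS !addnS.
- by exists 0; rewrite ?addr0 //; apply: bwl0.
- by exists (y1 - y2); [apply: bwlB | rewrite addrACA -opprD].
Qed.

Lemma bwl_supp t a W x : bwl t a W x -> forall v, v + a \notin W -> x v = 0.
Proof.
move=> Hx v vaW; elim: Hx => [b Y j YW baW||x1 x2 _ H1 _ H2].
- rewrite pow2_xUE mem_affine; have [vbY|] := boolP (v + b \in Y); last by rewrite mulr0.
  case/negP: vaW; have -> : v + a = v + b + (b + a).
    by rewrite addrA addrK_F2.
  by rewrite rpredD //; apply: subvP vbY.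
- by rewrite ffunE.
- by rewrite !ffunE H1 H2 subr0.
Qed.

Lemma bwl_coord t a W x v : bwl t a W x -> exists z : int, x v = 2 ^+ t./2 * z%:~R.
Proof.
elim=> [b Y j YW baW||x1 x2 _ [z1 H1] _ [z2 H2]].
- set e := (_ + j)%N; rewrite pow2_xUE.
  exists (2 ^ (e - t./2) * (v \in affine_sub b Y))%N.
  rewrite -pmulrn natrM natrX mulrA -exprD subnKC //.
  by rewrite /e -!divn2; lia.
- by exists 0; rewrite ffunE mulr0.
- by exists (z1 - z2); rewrite !ffunE H1 H2 intrB mulrBr.
Qed.

Definition restrict (A : {set V}) x : vec := [ffun v => (v \in A)%:R * x v].
Definition translate c x : vec := [ffun v => x (v + c)].

Lemma restrictB A x y : restrict A (x - y) = restrict A x - restrict A y.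
Proof. by apply/ffunP => v; rewrite !ffunE mulrBr. Qed.

Lemma translateB c x y : translate c (x - y) = translate c x - translate c y.
Proof. by apply/ffunP => v; rewrite !ffunE. Qed.

Lemma restrict0 A : restrict A 0 = 0.
Proof. by apply/ffunP => v; rewrite !ffunE mulr0. Qed.

Lemma translate0 c : translate c 0 = 0.
Proof. by apply/ffunP => v; rewrite !ffunE. Qed.

Lemma restrict_pow2_xU A e U : restrict A (pow2_xU e U) = pow2_xU e (A :&: U).
Proof. by apply/ffunP => v; rewrite ffunE !pow2_xUE in_setI mulrCA -natrM mulnb. Qed.

Lemma translate_pow2_xU c e q Y :
  translate c (pow2_xU e (affine_sub q Y)) = pow2_xU e (affine_sub (q + c) Y).
Proof.
by apply/ffunP => v; rewrite ffunE !pow2_xUE !mem_affine addrA (addrAC v c).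
Qed.

Lemma pow2_xU_setU e (A A' : {set V}) : [disjoint A & A'] ->
  pow2_xU e (A :|: A') = pow2_xU e A + pow2_xU e A'.
Proof.
move=> /pred0P dAA'; apply/ffunP => v; rewrite [RHS]ffunE !pow2_xUE in_setU -mulrDr -natrD.
by have := dAA' v; rewrite /= => /negbT; case: (v \in A); case: (v \in A').
Qed.

Lemma pow2_xU0 e : pow2_xU e set0 = 0.
Proof. by apply/ffunP => v; rewrite pow2_xUE ffunE in_set0 mulr0. Qed.

Section Split.
Variables (t : nat) (a c : V) (W : {vspace V}).
Hypothesis cW : c \notin W.
Local Notation B := (affine_sub a W).

Lemma bwl_restrict_sub q Y e : (Y <= W)%VS -> q + a \in (W + <[c]>)%VS ->
  (((\dim W - \dim Y).+1 + t)./2 <= e)%N ->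
  bwl t.+1 a W (restrict B (pow2_xU e (affine_sub q Y))).
Proof.
move=> YW qaWc le_e; rewrite restrict_pow2_xU affine_subI_sub //.
case: ifP => qaW; last by rewrite pow2_xU0; apply: bwl0.
by apply: bwl_gen_le; rewrite // addnS -addSn.
Qed.

Lemma bwl_pow2_xU_diff p p' Y e : (Y <= W)%VS -> p + a \in W -> p' + a \in W ->
  ((\dim W - \dim Y + t)./2 <= e)%N ->
  bwl t.+1 a W (pow2_xU e (affine_sub p Y) - pow2_xU e (affine_sub p' Y)).
Proof.
move=> YW paW p'aW le_e.
have [pp'Y|pp'Y] := boolP (p + p' \in Y).
  by rewrite (affine_sub_rebase pp'Y) subrr; apply: bwl0.
have pp'W : p + p' \in W.
  by have := rpredD paW p'aW; rewrite addrACA addrr_F2 addr0.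
have -> : pow2_xU e (affine_sub p Y) - pow2_xU e (affine_sub p' Y) =
    pow2_xU e (affine_sub p (Y + <[p + p']>)) - pow2_xU e.+1 (affine_sub p' Y).
  rewrite affine_sub_add_line // pow2_xU_setU ?disjoint_affine_sub_line //.
  by rewrite addrA addrr_F2 add0r pow2_xUS opprD addrA addrK.
have sF : (Y + <[p + p']> <= W)%VS by rewrite subv_add YW -memvE.
have := dimvS sF; rewrite dim_add_line // => ltYW.
apply: bwlB; apply: bwl_gen_le; rewrite ?dim_add_line //; move: ltYW le_e.
  (* [set] identifies convertible copies of [\dim W], [\dim Y] for [lia]. *)
  all: by rewrite -!divn2; set dW := \dim W; set dY := \dim Y; lia.
Qed.

Lemma bwl_split (x : vec) : bwl t a (W + <[c]>) x ->
  [/\ bwl t a W (restrict B x), bwl t a W (restrict B (translate c x))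
    & bwl t.+1 a W (restrict B x - restrict B (translate c x))].
Proof.
elim=> [b Y j YWc baWc||x1 x2 _ [l1 h1 d1] _ [l2 h2 d2]]; last 2 first.
- by rewrite !(restrict0, translate0) subr0; split; apply: bwl0.
- rewrite translateB !restrictB subrACA.
  by split; apply: bwlB.
have bcaWc : b + c + a \in (W + <[c]>)%VS.
  by rewrite addrAC rpredD // memv_add_line addrr_F2 mem0v orbT.
rewrite translate_pow2_xU dim_add_line //.
have [YW|YW] := boolP (Y <= W)%VS.
  have le_e : (((\dim W - \dim Y).+1 + t)./2 <= ((\dim W).+1 - \dim Y + t)./2 + j)%N.
    by rewrite -subSn ?leq_addr // dimvS.
  have lo := bwl_restrict_sub YW baWc le_e.
  have hi := bwl_restrict_sub YW bcaWc le_e.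
  by split; [exact: bwl_succ | exact: bwl_succ | exact: bwlB].
rewrite !restrict_pow2_xU.
have [p paW ->] := affine_subI_transversal cW YWc YW baWc.
have [p' p'aW ->] := affine_subI_transversal cW YWc YW bcaWc.
rewrite -(dim_capv_transversal cW YWc YW) subSS.
split; try (apply: bwl_gen => //; exact: capvSr).
by apply: bwl_pow2_xU_diff; rewrite ?capvSr ?leq_addr.
Qed.

End Split.


Lemma dotRC x y : dotR x y = dotR y x.
Proof. by apply: eq_bigr => v _; rewrite mulrC. Qed.

Lemma dotR0l x : dotR 0 x = 0.
Proof. by rewrite /dotR big1 // => v _; rewrite ffunE mul0r. Qed.

Lemma dotRDl x y z : dotR (x + y) z = dotR x z + dotR y z.
Proof. by rewrite -big_split; apply: eq_bigr => v _; rewrite ffunE mulrDl. Qed.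

Lemma dotRNl x z : dotR (- x) z = - dotR x z.
Proof. by rewrite -sumrN; apply: eq_bigr => v _; rewrite ffunE mulNr. Qed.

Lemma dotRBl x y z : dotR (x - y) z = dotR x z - dotR y z.
Proof. by rewrite dotRDl dotRNl. Qed.

Lemma dotRDr x y z : dotR z (x + y) = dotR z x + dotR z y.
Proof. by rewrite dotRC dotRDl !(dotRC z). Qed.

Lemma dotRNr x z : dotR z (- x) = - dotR z x.
Proof. by rewrite dotRC dotRNl dotRC. Qed.

Lemma dotRBr x y z : dotR z (x - y) = dotR z x - dotR z y.
Proof. by rewrite dotRC dotRBl !(dotRC z). Qed.

Lemma dotR_eq0 x : (dotR x x == 0) = (x == 0).
Proof.
apply/idP/eqP => [|->]; last by rewrite dotR0l.
move/eqP/psumr_eq0P => x0; apply/ffunP => v; rewrite ffunE.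
have /eqP : x v * x v = 0 by apply: x0 => // w _; rewrite -expr2 sqr_ge0.
by rewrite mulf_eq0 orbb => /eqP.
Qed.

Lemma dotR_supp a W x y : (forall v, v + a \notin W -> x v = 0) ->
  dotR x y = \sum_(v in affine_sub a W) x v * y v.
Proof.
move=> x0; rewrite /dotR (bigID (mem (affine_sub a W))) /= addrC big1 ?add0r //.
by move=> v; rewrite mem_affine => /x0 ->; rewrite mul0r.
Qed.

Lemma restrict_out A x v : v \notin A -> restrict A x v = 0.
Proof. by rewrite ffunE => /negbTE ->; rewrite mul0r. Qed.

Lemma restrict_in A x v : v \in A -> restrict A x v = x v.
Proof. by rewrite ffunE => ->; rewrite mul1r. Qed.

Lemma dotR_split a c W x y : c \notin W ->
  (forall v, v + a \notin (W + <[c]>)%VS -> x v = 0) ->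
  dotR x y = dotR (restrict (affine_sub a W) x) (restrict (affine_sub a W) y) +
    dotR (restrict (affine_sub a W) (translate c x)) (restrict (affine_sub a W) (translate c y)).
Proof.
move=> cW x0; rewrite (dotR_supp _ x0) sum_affine_add_line //.
have restr0 z v : v + a \notin W -> restrict (affine_sub a W) z v = 0.
  by rewrite -mem_affine; apply: restrict_out.
rewrite !(dotR_supp _ (restr0 _)); congr (_ + _); apply: eq_bigr => v vB.
  by rewrite !restrict_in.
by rewrite !restrict_in // !ffunE.
Qed.

Lemma bwl_coord_sqr t a W x v : bwl t a W x ->
  exists n : nat, x v * x v = 2 ^+ (t./2).*2 * n%:R /\ (x v != 0 -> (0 < n)%N).
Proof.
case/(bwl_coord v) => z ->; rewrite mulrACA -exprD addnn.
have [n zz] : exists n : nat, z%:~R * z%:~R = n%:R :> R.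
  case: z => n; first by exists (n * n)%N; rewrite natrM.
  by exists (n.+1 * n.+1)%N; rewrite NegzE intrN mulrNN natrM.
exists n; rewrite zz; split => // nz; rewrite lt0n; apply: contra nz => /eqP n0.
have /eqP : (z%:~R * z%:~R : R) = 0 by rewrite zz n0.
by rewrite mulf_eq0 orbb => /eqP ->; rewrite mulr0.
Qed.

Lemma bwl_dim0 t a W x : \dim W = 0%N -> bwl t a W x ->
  exists n : nat, dotR x x = 2 ^+ (t./2).*2 * n%:R /\ (x != 0 -> (0 < n)%N).
Proof.
move/eqP; rewrite dimv_eq0 => /eqP W0 Hx; have [n [xa n0]] := bwl_coord_sqr a Hx.
have x0 v : v != a -> x v = 0.
  by move=> va; apply: (bwl_supp Hx); rewrite W0 memv0 -subr_F2 subr_eq0.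
exists n; split.
  by rewrite /dotR (bigD1 a) //= big1 ?addr0 // => v /x0 ->; rewrite mul0r.
move=> xn0; apply: n0; apply: contra xn0 => /eqP xa0; apply/eqP/ffunP => v.
by rewrite ffunE; have [->|/x0] := eqVneq v a.
Qed.

Lemma bwl_dim0_min t a W x : \dim W = 0%N -> bwl t a W x -> x != 0 ->
  2 ^+ t <= 2 * dotR x x.
Proof.
move=> dW Hx xn0; have [n [-> n0]] := bwl_dim0 dW Hx.
have n1 : 1 <= n%:R :> R by rewrite ler1n n0.
have o2 : 2 ^+ odd t <= 2 :> R by case: (odd t); rewrite ?expr1 ?expr0 ?ler1n.
have X0 : 0 <= 2 ^+ (t./2).*2 :> R by rewrite exprn_ge0.
by rewrite -[in 2 ^+ t](odd_double_half t) exprD; nra.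
Qed.

Lemma bwl_dim0_gap t a W x : \dim W = 0%N -> bwl t a W x ->
  2 ^+ t < 2 * dotR x x -> 3 * 2 ^+ t <= 4 * dotR x x.
Proof.
move=> dW Hx; have [n [-> _]] := bwl_dim0 dW Hx.
rewrite -[in 2 ^+ t](odd_double_half t) exprD.
set X := 2 ^+ _.*2; have X0 : 0 < X by rewrite exprn_gt0.
case: (odd t); rewrite ?expr1 ?expr0 ?mul1r => lt.
  have : 1 < n%:R :> R by nra.
  by rewrite ltr1n -(ler_nat R) => n2; nra.
have : 0 < n%:R :> R by nra.
by rewrite ltr0n -(ler_nat R) => n1; nra.
Qed.

Lemma bwl_min k t a W : \dim W = k -> forall x, bwl t a W x -> x != 0 ->
  2 ^+ (k + t) <= 2 * dotR x x.
Proof.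
elim: k t a W => [|k IHk] t a W dW x Hx xn0.
  by rewrite add0n; apply: bwl_dim0_min dW Hx xn0.
have [W' [c [cW WE dW']]] := vspace_add_line dW; rewrite {}WE in Hx.
have [lo hi df] := bwl_split cW Hx.
rewrite (dotR_split _ cW (bwl_supp Hx)) addSn exprS.
set u := restrict _ x in lo df *; set w := restrict _ (translate c x) in hi df *.
have [u0|un0] := eqVneq u 0; have [w0|wn0] := eqVneq w 0.
- by case/negP: xn0; rewrite -dotR_eq0 (dotR_split _ cW (bwl_supp Hx)) -/u -/w u0 w0 dotR0l addr0.
- have Hw : bwl t.+1 a W' w by move: (bwlN df); rewrite u0 sub0r opprK.
  by have := IHk _ _ _ dW' _ Hw wn0; rewrite u0 dotR0l addnS exprS; lra.
- have Hu : bwl t.+1 a W' u by move: df; rewrite w0 subr0.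
  by have := IHk _ _ _ dW' _ Hu un0; rewrite w0 dotR0l addnS exprS; lra.
- by have := IHk _ _ _ dW' _ lo un0; have := IHk _ _ _ dW' _ hi wn0; lra.
Qed.

Lemma dotR_restrict A x y :
  dotR (restrict A x) (restrict A y) = \sum_(v in A) x v * y v.
Proof.
rewrite /dotR (bigID (mem A)) /= addrC big1 ?add0r => [|v vA]; last first.
  by rewrite restrict_out ?mul0r.
by apply: eq_bigr => v vA; rewrite !restrict_in.
Qed.

Lemma restrict_translate0 b c W x : restrict (affine_sub b W) x = 0 ->
  restrict (affine_sub (b + c) W) (translate c x) = 0.
Proof.
move=> x0; apply/ffunP => v; rewrite !ffunE.
have [vbcW|] := boolP (v \in affine_sub (b + c) W); last by rewrite mul0r.
have vcB : v + c \in affine_sub b W by rewrite mem_affine addrAC -addrA -mem_affine.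
have : restrict (affine_sub b W) x (v + c) = 0 by rewrite x0 ffunE.
by rewrite restrict_in // => ->; rewrite mulr0.
Qed.

Lemma bwl0_min_vector_half k a W u : \dim W = k.+1 -> bwl 0 a W u ->
  2 * dotR u u = 2 ^+ k.+1 ->
  exists b W' c, [/\ c \notin W', W = (W' + <[c]>)%VS, b + a \in W &
    restrict (affine_sub b W') (translate c u) = 0].
Proof.
move=> dW Hu Nu; apply: NNPP => noHalf.
have bal : balanced (fun v => u v * u v) a W.
  move=> b W' c baW cW WE.
  have dW' : \dim W' = k by move: dW; rewrite WE dim_add_line // => -[].
  have Hub : bwl 0 b (W' + <[c]>) u by rewrite -WE; exact: bwl_rebase baW Hu.
  have [lo hi _] := bwl_split cW Hub.
  have hin0 : restrict (affine_sub b W') (translate c u) != 0.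
    by apply/eqP => hi0; apply: noHalf; exists b, W', c.
  have lon0 : restrict (affine_sub b W') u != 0.
    apply/eqP => /(restrict_translate0 c) lo0; apply: noHalf.
    exists (b + c), W', c; split => //.
    by rewrite addrAC; apply: rpredD baW _; rewrite WE memv_add_line addrr_F2 mem0v orbT.
  have := bwl_min dW' lo lon0; have := bwl_min dW' hi hin0.
  rewrite -dotR_restrict (sum_affine_shift (fun v => u v * u v)).
  rewrite (eq_bigr (fun v => translate c u v * translate c u v)) -?dotR_restrict; last first.
    by move=> v _; rewrite !ffunE.
  by move: Nu; rewrite (dotR_split _ cW (bwl_supp Hub)) addn0 exprS; lra.
have cst := balanced_const dW bal.
have [n [/= ua _]] := bwl_coord_sqr a Hu.
move: Nu; rewrite (dotR_supp _ (bwl_supp Hu)).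
rewrite (eq_bigr (fun=> u a * u a)) => [|v]; last by rewrite mem_affine => /cst.
rewrite sumr_const card_affine_sub dW ua mul1r -(mulr_natr n%:R) natrX => Nn.
have : (2 * n)%:R = 1 :> R.
  apply: (mulIf (x := 2 ^+ k.+1)); first by rewrite expf_neq0 // pnatr_eq0.
  by rewrite natrM mul1r -[in RHS]Nn mulrA.
by move/eqP; rewrite pnatr_eq1 => /eqP; lia.
Qed.

Lemma bwl_min_dot0 k a W : \dim W = k -> forall u s, bwl 0 a W u -> bwl 1 a W s ->
  2 * dotR u u = 2 ^+ k -> dotR s s = 2 ^+ k ->
  2 ^+ k < 4 * dotR u s -> 3 * 2 ^+ k < 8 * dotR u s.
Proof.
elim: k a W => [|k IHk] a W dW u s Hu Hs Nu Ns.
  have [n [Nn _]] := bwl_dim0 dW Hu; move: Nu; rewrite Nn /= mul1r -natrM.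
  by move/eqP; rewrite pnatr_eq1 => /eqP; lia.
have [b [W' [c [cW WE baW hi0]]]] := bwl0_min_vector_half dW Hu Nu.
have dW' : \dim W' = k by move: dW; rewrite WE dim_add_line // => -[].
rewrite {}WE in Hu Hs baW.
have Hub := bwl_rebase baW Hu; have Hsb := bwl_rebase baW Hs.
have [Hp _ Hp1] := bwl_split cW Hub; rewrite hi0 subr0 in Hp1.
have [Hq Hq' Hqq'] := bwl_split cW Hsb; have [y Hy qq'] := bwl_halve Hqq'.
move: Nu Ns; rewrite !(dotR_split _ cW (bwl_supp Hub)) (dotR_split _ cW (bwl_supp Hsb)).
rewrite hi0 !dotR0l !addr0 exprS.
set p := restrict _ u in Hp Hp1 *; set q := restrict _ s in Hq qq' *.
set q' := restrict _ (translate c s) in Hq' qq' *.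
move=> Np Ns lt_pq.
have pos : 0 < 2 ^+ k :> R by rewrite exprn_gt0.
have [q0|qn0] := eqVneq q 0; first by move: lt_pq; rewrite q0 dotRC dotR0l; lra.
have [q'0|q'n0] := eqVneq q' 0.
  move: qq'; rewrite q'0 subr0 => qE; rewrite {}qE in Ns lt_pq *.
  have Ny : 2 * dotR y y = 2 ^+ k by move: Ns; rewrite q'0 dotR0l addr0 !(dotRDl, dotRDr); lra.
  have := IHk _ _ dW' _ _ Hy Hp1 Ny; rewrite (dotRC y p) !dotRDr.
  by move: Np lt_pq; rewrite !dotRDr; lra.
have := bwl_min dW' Hq qn0; have := bwl_min dW' Hq' q'n0; rewrite addn1 exprS => Nq' Nq.
have [pq|pqn] := eqVneq p q; first by rewrite -pq; lra.
have pqn0 : p - q != 0 by rewrite subr_eq0.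
have := bwl_min dW' (bwlB Hp1 Hq) pqn0; rewrite addn1 exprS dotRBl !dotRBr (dotRC q p).
lra.
Qed.

Lemma bwl_min_dot k t a W : \dim W = k -> forall u s, bwl t a W u -> bwl t.+1 a W s ->
  2 * dotR u u = 2 ^+ (k + t) -> dotR s s = 2 ^+ (k + t) ->
  2 ^+ (k + t) < 4 * dotR u s -> 3 * 2 ^+ (k + t) < 8 * dotR u s.
Proof.
move=> dW; elim/ltn_ind: t => -[|[|t]] IHt u s Hu Hs.
- by rewrite addn0; exact: (bwl_min_dot0 dW Hu Hs).
- have [y Hy ->] := bwl_halve Hs; have := bwl_min_dot0 dW Hy Hu.
  rewrite addn1 exprS !(dotRDl, dotRDr) (dotRC u y); lra.
- have [u' Hu' ->] := bwl_halve Hu; have [s' Hs' ->] := bwl_halve Hs.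
  have := IHt t (leqnSn _) u' s' Hu' Hs'.
  rewrite !addnS !exprS !(dotRDl, dotRDr); lra.
Qed.

(* The inductive step of the gap, with P, Q standing for L_t, L_(t+1) on a
   hyperplane and N = 2^(dim + t). *)
Section GapStep.
Variables (P Q : vec -> Prop) (N : R).
Hypothesis QN : forall x, Q x -> Q (- x).
Hypothesis P_min : forall x, P x -> x != 0 -> N <= 2 * dotR x x.
Hypothesis Q_min : forall x, Q x -> x != 0 -> N <= dotR x x.
Hypothesis P_gap : forall x, P x -> N < 2 * dotR x x -> 3 * N <= 4 * dotR x x.
Hypothesis Q_gap : forall x, Q x -> N < dotR x x -> 3 * N <= 2 * dotR x x.
Hypothesis PQ_dot : forall u s, P u -> Q s -> 2 * dotR u u = N -> dotR s s = N ->
  N < 4 * dotR u s -> 3 * N < 8 * dotR u s.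

Lemma gap_step_min u w : P u -> P w -> Q (u - w) -> Q (u + w) ->
  2 * dotR u u = N -> w != 0 ->
  N < dotR u u + dotR w w -> 3 * N <= 2 * (dotR u u + dotR w w).
Proof.
move=> Pu Pw Qs Qs' Nu wn0 lt; rewrite leNgt; apply/negP => gt.
have Nw := P_gap Pw (ltac:(lra)).
have [s0|sn0] := eqVneq (u - w) 0.
  by move: lt; move/eqP: s0; rewrite subr_eq0 => /eqP <-; lra.
have [s'0|s'n0] := eqVneq (u + w) 0.
  move/eqP: s'0; rewrite addr_eq0 => /eqP uE.
  by move: lt Nu; rewrite uE dotRNl dotRNr opprK; lra.
have [es|ns] := eqVneq (dotR (u - w) (u - w)) N.
  suff /(PQ_dot Pu Qs Nu es) : N < 4 * dotR u (u - w).
    by move: es Nw; rewrite !(dotRBl, dotRBr) (dotRC w u); lra.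
  by move: es lt gt; rewrite !(dotRBl, dotRBr) (dotRC w u); lra.
have [es'|ns'] := eqVneq (dotR (u + w) (u + w)) N.
  suff /(PQ_dot Pu Qs' Nu es') : N < 4 * dotR u (u + w).
    by move: es' Nw; rewrite !(dotRDl, dotRDr) (dotRC w u); lra.
  by move: es' lt gt; rewrite !(dotRDl, dotRDr) (dotRC w u); lra.
have lt_s : N < dotR (u - w) (u - w) by rewrite lt_neqAle eq_sym ns Q_min.
have lt_s' : N < dotR (u + w) (u + w) by rewrite lt_neqAle eq_sym ns' Q_min.
have := Q_gap Qs lt_s; have := Q_gap Qs' lt_s'.
by rewrite !(dotRDl, dotRDr, dotRNl, dotRNr) (dotRC w u); lra.
Qed.

Lemma gap_step u w : P u -> P w -> Q (u - w) -> Q (u + w) ->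
  N < dotR u u + dotR w w -> 3 * N <= 2 * (dotR u u + dotR w w).
Proof.
move=> Pu Pw Qs Qs'.
have [u0|un0] := eqVneq u 0.
  by rewrite u0 dotR0l !add0r; apply: Q_gap; rewrite -[w]add0r -u0.
have [w0|wn0] := eqVneq w 0.
  by rewrite w0 dotR0l !addr0; apply: Q_gap; rewrite -[u]subr0 -w0.
have [Nu|ltu] := eqVneq (2 * dotR u u) N; first exact: gap_step_min.
have [Nw|ltw] := eqVneq (2 * dotR w w) N.
  rewrite addrC; apply: gap_step_min => //; try by rewrite addrC.
  by rewrite -opprB; apply: QN.
have ltu' : N < 2 * dotR u u by rewrite lt_neqAle eq_sym ltu P_min.
have ltw' : N < 2 * dotR w w by rewrite lt_neqAle eq_sym ltw P_min.
by have := P_gap Pu ltu'; have := P_gap Pw ltw'; lra.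
Qed.

End GapStep.

Theorem bwl_gap k t a W : \dim W = k -> forall x, bwl t a W x ->
  2 ^+ (k + t) < 2 * dotR x x -> 3 * 2 ^+ (k + t) <= 4 * dotR x x.
Proof.
elim: k t a W => [|k IHk] t a W dW x Hx.
  by rewrite add0n; apply: bwl_dim0_gap dW Hx.
have [W' [c [cW WE dW']]] := vspace_add_line dW; rewrite {}WE in Hx.
have [Hu Hw Hs] := bwl_split cW Hx.
rewrite (dotR_split _ cW (bwl_supp Hx)) addSn exprS.
set u := restrict _ x in Hu Hs *; set w := restrict _ (translate c x) in Hw Hs *.
have Hs' : bwl t.+1 a W' (u + w).
  have -> : u + w = (u + u) - (u - w) by rewrite addrKA opprK.
  exact: bwlB (bwl_double Hu) Hs.
have Q_min (y : vec) : bwl t.+1 a W' y -> y != 0 -> 2 ^+ (k + t) <= dotR y y.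
  by move=> Hy /(bwl_min dW' Hy); rewrite addnS exprS; lra.
have Q_gap (y : vec) : bwl t.+1 a W' y -> 2 ^+ (k + t) < dotR y y ->
    3 * 2 ^+ (k + t) <= 2 * dotR y y.
  move=> Hy lt; have := IHk _ _ _ dW' _ Hy; rewrite addnS exprS => gap.
  by have := gap (ltac:(lra)); lra.
have := gap_step (@bwlN t.+1 a W') (bwl_min dW') Q_min (IHk _ _ _ dW') Q_gap
  (bwl_min_dot dW') Hu Hw Hs Hs'.
lra.
Qed.

End BarnesWall.

Lemma dimvf_rV m : \dim (fullv : {vspace 'rV['F_2]_m}) = m.
Proof. by rewrite dimvf /dim /= mul1n. Qed.

Lemma BW_bwl (R : realFieldType) m (x : vecR R m) : BW x -> bwl 0 0 fullv x.
Proof.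
elim=> [y [r [a [W [rm dW ->]]]]||y z _ Hy _ Hz]; last 2 first.
- exact: bwl0.
- exact: bwlB.
have -> : [ffun v => 2 ^+ (m - r)./2 * xU R (affine_sub a W) v] =
    pow2_xU R ((\dim (fullv : {vspace Vm m}) - \dim W + 0)./2 + 0) (affine_sub a W).
  by apply/ffunP => v; rewrite pow2_xUE !ffunE dimvf_rV dW !addn0.
by apply: bwl_gen; rewrite ?subvf ?memvf.
Qed.

Theorem theorem3p3 (R : realFieldType) (m : nat) (hm : (1 <= m)%N)
  (x : vecR R m) (hx : BW x)
  (hgt : 2 ^+ m.-1 < dotR x x) :
  2 ^+ m.-1 + (2 : R) ^ (m%:Z - 2) <= dotR x x.
Proof.
have := bwl_gap (dimvf_rV m) (BW_bwl hx); rewrite addn0.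
case: m hm x hx hgt => [//|k] _ x _ /= hgt; rewrite exprS => gap.
have -> : (2 : R) ^ (k.+1%:Z - 2) = 2 ^+ k / 2.
  have -> : (k.+1%:Z - 2 = k%:Z + (-1))%R by rewrite -addn1 PoszD; ring.
  by rewrite expfzDr ?pnatr_eq0.
lra.
Qed.
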